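(* There exists an ultragraph $\mathcal G'$ (with no sinks) whose ultragraph shift space $X'$ is countable and contains a DC1 pair (for a suitable enumeration of the ultrapaths defining the metric); in particular $X'$ has a DC1 pair but no uncountable DC1 set (and is not Li–Yorke chaotic). Concretely, $\mathcal G'$ can be taken with vertices $\{v_n\}_{n\ge0}$, edges $\{e_n\}_{n\ge0}$, $s(e_n)=v_n$ for all $n\ge0$, $r(e_n)=\{v_{n+1}\}$ for $n\ge1$, and $r(e_0)=A$ where $A=\bigcup_{i\ge1}V_i$, $V_1=\{v_1,\dots,v_{k_1}\}$, $V_n=\{v_{t_n+1},\dots,v_{t_n+k_n}\}$ with $t_n=\sum_{i=1}^{n-1}(k_i+\ell_i)$ for $n>1$, for suitably chosen sequences of positive integers $(k_n)$, $(\ell_n)$; the DC1 pair is $(e_1e_2e_3\dots,\ A)$.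
   Context: An ultragraph $\mathcal G=(G^0,\mathcal G^1,r,s)$ consists of countable sets $G^0$ (vertices) and $\mathcal G^1$ (edges), a map $s:\mathcal G^1\to G^0$ and a map $r:\mathcal G^1\to P(G^0)\setminus\{\emptyset\}$. Standing assumption: $\mathcal G$ has no sinks, i.e. $s^{-1}(v)\neq\emptyset$ for every $v\in G^0$. $\mathcal G^0$ is the smallest subset of $P(G^0)$ containing $\{v\}$ for all $v\in G^0$ and $r(e)$ for all $e\in\mathcal G^1$, and closed under finite unions and nonempty finite intersections. A finite path is either an element of $\mathcal G^0$ (length $0$) or a sequence of edges $e_1\dots e_k$ with $s(e_{i+1})\in r(e_i)$ (length $k$); an infinite path is a sequence $e_1e_2\dots$ of edges with $s(e_{i+1})\in r(e_i)$ for all $i$, and $\mathfrak p^\infty$ is the set of infinite paths. The set of ultrapaths $\mathfrak p$ consists of all $A\in\mathcal G^0$ (length $0$) and all pairs $(\alpha,A)$ with $\alpha=e_1\dots e_k$ a finite path, $k\ge1$, $A\in\mathcal G^0$, $A\subseteq r(e_k)$ (length $k$). A set $A\in\mathcal G^0$ is an infinite emitter if $\{e\in\mathcal G^1:s(e)\in A\}$ is infinite, and a minimal infinite emitter if moreover no proper subset of $A$ belonging to $\mathcal G^0$ is an infinite emitter. The ultragraph shift space is $X=\mathfrak p^\infty\cup X_{fin}$, where $X_{fin}$ consists of all $(\alpha,A)\in\mathfrak p$ with $|\alpha|\ge1$ and $A$ a minimal infinite emitter contained in $r(\alpha)$, together with all minimal infinite emitters $A\in\mathcal G^0$. An ultrapath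 $p$ is an initial segment of $x\in X$ when: if $p=A\in\mathcal G^0$, then either $x$ has length $\ge1$ and its first edge has source in $A$, or $x=B\in\mathcal G^0$ with $B\subseteq A$; if $p=(\alpha,A)$ with $|\alpha|\ge1$, then the first $|\alpha|$ edges of $x$ form $\alpha$ and either $x$ has length $>|\alpha|$ and its $(|\alpha|+1)$-th edge has source in $A$, or $x=(\alpha,B)$ with $B\subseteq A$. Fix an enumeration $\mathfrak p=\{p_1,p_2,\dots\}$; the metric on $X$ is $d(x,x)=0$ and, for $x\neq y$, $d(x,y)=2^{-i}$ where $i$ is the least index such that $p_i$ is an initial segment of exactly one of $x,y$. The shift map $\sigma:X\to X$ is $\sigma(\gamma_1\gamma_2\dots)=\gamma_2\gamma_3\dots$, $\sigma((\gamma_1\dots\gamma_n,A))=(\gamma_2\dots\gamma_n,A)$ if $n>1$, $\sigma((\gamma_1,A))=A$, $\sigma(A)=A$. For $\delta>0$, $n\ge1$, $\Phi(n,\delta,x,y)=\frac{\#\{0\le k\le n: d(\sigma^k(x),\sigma^k(y))<\delta\}}{n}$. A pair $(x,y)$ is a DC1 pair if $\limsup_n\Phi(n,\delta,x,y)=1$ for all $\delta>0$ and $\liminf_n\Phi(n,\delta_0,x,y)=0$ for some $\delta_0>0$; a DC1 set is a set in which every pair of distinct points is a DC1 pair. A scrambled (Li–Yorke) pair satisfies $\liminf_n d(\sigma^n x,\sigma^n y)=0<\limsup_n d(\sigma^n x,\sigma^n y)$, and $X$ is Li–Yorke chaotic if it has an uncountable set all of whose distinct pairs are scrambled. *)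

From Stdlib Require Import Reals List Arith ClassicalEpsilon.
Open Scope R_scope.

Definition subset {V : Type} (A B : V -> Prop) : Prop := forall v, A v -> B v.

(* Inductive generation of the lattice 𝒢^0 (singletons, ranges, closed under
   binary unions and binary intersections; binary closure = finite closure for
   nonempty finite families). *)
Inductive G0i {V E : Type} (r : E -> V -> Prop) : (V -> Prop) -> Prop :=
| G0i_sing : forall v : V, G0i r (fun w => w = v)
| G0i_rng : forall e : E, G0i r (r e)
| G0i_union : forall A B, G0i r A -> G0i r B -> G0i r (fun x => A x \/ B x)
| G0i_inter : forall A B, G0i r A -> G0i r B -> G0i r (fun x => A x /\ B x).

Definition inG0 {V E : Type} (r : E -> V -> Prop) (A : V -> Prop) : Prop :=
  exists B, G0i r B /\ forall x, A x <-> B x.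

(* Ultragraph axioms for (s, r): ranges nonempty, no sinks.
   (Countability of vertices/edges is ensured by taking V = E = nat below.) *)
Definition ranges_nonempty {V E : Type} (r : E -> V -> Prop) : Prop :=
  forall e, exists v, r e v.
Definition no_sinks {V E : Type} (s : E -> V) : Prop :=
  forall v, exists e, s e = v.

(* points: infinite sequences of edges, or pairs (alpha, A) (alpha = [] encodes A) *)
Inductive pt (V E : Type) : Type :=
| Inf : (nat -> E) -> pt V E
| Fin : list E -> (V -> Prop) -> pt V E.
Arguments Inf {V E} _.
Arguments Fin {V E} _ _.

Definition is_path {V E : Type} (s : E -> V) (r : E -> V -> Prop) (a : list E) : Prop :=
  forall i e f, nth_error a i = Some e -> nth_error a (S i) = Some f -> r e (s f).

(* A ⊆ r(last edge of a) when a is nonempty; vacuous for a = [] *)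
Definition ends_in {V E : Type} (r : E -> V -> Prop) (a : list E) (A : V -> Prop) : Prop :=
  forall e, nth_error a (pred (length a)) = Some e -> subset A (r e).

Definition is_upath {V E : Type} (s : E -> V) (r : E -> V -> Prop)
  (q : list E * (V -> Prop)) : Prop :=
  inG0 r (snd q) /\ is_path s r (fst q) /\ ends_in r (fst q) (snd q).

Definition infinite_emitter {V E : Type} (s : E -> V) (r : E -> V -> Prop)
  (A : V -> Prop) : Prop :=
  inG0 r A /\ forall l : list E, exists e, A (s e) /\ ~ In e l.

Definition minimal_infinite_emitter {V E : Type} (s : E -> V) (r : E -> V -> Prop)
  (A : V -> Prop) : Prop :=
  infinite_emitter s r A /\
  forall B, inG0 r B -> subset B A -> (exists v, A v /\ ~ B v) ->
    ~ infinite_emitter s r B.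

Definition in_X {V E : Type} (s : E -> V) (r : E -> V -> Prop) (x : pt V E) : Prop :=
  match x with
  | Inf g => forall k, r (g k) (s (g (S k)))
  | Fin a A => is_path s r a /\ minimal_infinite_emitter s r A /\ ends_in r a A
  end.

Definition edge_at {V E : Type} (x : pt V E) (k : nat) : option E :=
  match x with
  | Inf g => Some (g k)
  | Fin a _ => nth_error a k
  end.

Definition is_init {V E : Type} (s : E -> V) (q : list E * (V -> Prop)) (x : pt V E) : Prop :=
  (forall j e, nth_error (fst q) j = Some e -> edge_at x j = Some e) /\
  ((exists e, edge_at x (length (fst q)) = Some e /\ snd q (s e)) \/
   (exists B, x = Fin (fst q) B /\ subset B (snd q))).

(* enumeration p_1, p_2, ... of the ultrapaths (here p (i-1) is p_i) *)
Definition enumeration {V E : Type} (s : E -> V) (r : E -> V -> Prop)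
  (p : nat -> list E * (V -> Prop)) : Prop :=
  (forall i, is_upath s r (p i)) /\
  (forall q, is_upath s r q -> exists! i, p i = q).

Definition separates {V E : Type} (s : E -> V) (p : nat -> list E * (V -> Prop))
  (x y : pt V E) (i : nat) : Prop :=
  (is_init s (p i) x /\ ~ is_init s (p i) y) \/ (~ is_init s (p i) x /\ is_init s (p i) y).

(* d(x,y) = 2^{-(i+1)} for the least 0-based index i (i.e. p_{i+1}) separating x,y *)
Definition dist {V E : Type} (s : E -> V) (p : nat -> list E * (V -> Prop))
  (x y : pt V E) : R :=
  epsilon (inhabits 0) (fun d =>
    (x = y /\ d = 0) \/
    (x <> y /\ exists i, separates s p x y i /\
        (forall j, (j < i)%nat -> ~ separates s p x y j) /\ d = (/2) ^ (S i))).

Definition shift {V E : Type} (x : pt V E) : pt V E :=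
  match x with
  | Inf g => Inf (fun k => g (S k))
  | Fin (_ :: a) A => Fin a A
  | Fin nil A => Fin nil A
  end.

Definition shiftn {V E : Type} (k : nat) (x : pt V E) : pt V E := Nat.iter k shift x.

Definition ind (P : Prop) : R := if excluded_middle_informative P then 1 else 0.

Definition Phi {V E : Type} (s : E -> V) (p : nat -> list E * (V -> Prop))
  (n : nat) (delta : R) (x y : pt V E) : R :=
  sum_f_R0 (fun k => ind (dist s p (shiftn k x) (shiftn k y) < delta)) n / INR n.

Definition limsup_eq (u : nat -> R) (L : R) : Prop :=
  forall eps, 0 < eps ->
    (exists N, forall n, (N <= n)%nat -> u n < L + eps) /\
    (forall N, exists n, (N <= n)%nat /\ L - eps < u n).
Definition liminf_eq (u : nat -> R) (L : R) : Prop :=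
  forall eps, 0 < eps ->
    (exists N, forall n, (N <= n)%nat -> L - eps < u n) /\
    (forall N, exists n, (N <= n)%nat /\ u n < L + eps).

(* Φ is indexed by n >= 1, hence the shift n ↦ S n *)
Definition DC1_pair {V E : Type} (s : E -> V) (p : nat -> list E * (V -> Prop))
  (x y : pt V E) : Prop :=
  (forall delta, 0 < delta -> limsup_eq (fun n => Phi s p (S n) delta x y) 1) /\
  (exists delta0, 0 < delta0 /\ liminf_eq (fun n => Phi s p (S n) delta0 x y) 0).

Definition DC1_set {V E : Type} (s : E -> V) (p : nat -> list E * (V -> Prop))
  (S : pt V E -> Prop) : Prop :=
  forall x y, S x -> S y -> x <> y -> DC1_pair s p x y.

Definition scrambled_pair {V E : Type} (s : E -> V) (p : nat -> list E * (V -> Prop))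
  (x y : pt V E) : Prop :=
  liminf_eq (fun n => dist s p (shiftn n x) (shiftn n y)) 0 /\
  exists L, limsup_eq (fun n => dist s p (shiftn n x) (shiftn n y)) L /\ 0 < L.

Definition countable_set {T : Type} (S : T -> Prop) : Prop :=
  exists f : nat -> T, forall x, S x -> exists n, f n = x.

Definition Li_Yorke_chaotic {V E : Type} (s : E -> V) (r : E -> V -> Prop)
  (p : nat -> list E * (V -> Prop)) : Prop :=
  exists S : pt V E -> Prop, subset S (in_X s r) /\ ~ countable_set S /\
    forall x y, S x -> S y -> x <> y -> scrambled_pair s p x y.

(* The concrete ultragraph 𝒢': vertices v_n = n, edges e_n = n, s(e_n) = v_n,
   r(e_n) = {v_{n+1}} for n >= 1, r(e_0) = A = ⋃_{n>=1} V_n,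
   V_n = {v_{t_n+1}, ..., v_{t_n+k_n}}, t_n = Σ_{i=1}^{n-1} (k_i + l_i). *)
Fixpoint tsum (k l : nat -> nat) (n : nat) : nat :=
  match n with
  | O => O
  | S m => (tsum k l m + (k (S m) + l (S m)))%nat
  end.

Definition t_ (k l : nat -> nat) (n : nat) : nat := tsum k l (pred n).

Definition Aset (k l : nat -> nat) : nat -> Prop :=
  fun v => exists n, (1 <= n)%nat /\ (t_ k l n < v <= t_ k l n + k n)%nat.

Definition srcG (e : nat) : nat := e.

Definition rngG (k l : nat -> nat) (e : nat) : nat -> Prop :=
  match e with
  | O => Aset k l
  | S _ => fun v => v = S e
  end.

From Pilot Require Import Defs.
From Stdlib Require Import Reals List Arith Lia Lra Wf_nat Cantor
  Classical ClassicalEpsilon FunctionalExtensionality PropExtensionality.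
Open Scope R_scope.

(* 1. Every member of 𝒢^0 is either bounded or contains A, so A is the unique minimal
      infinite emitter; hence X consists of A, (e_0, A) and the paths e_a e_b e_{b+1} ...,
      and is countable.  A countable space has no uncountable DC1 or scrambled set.
   2. Ultrapaths are coded injectively by naturals (members of 𝒢^0 through the terms
      generating them) and there are infinitely many, so an enumeration exists.
   3. Each ultrapath is eventually unable to separate σ^n(e_1 e_2 ...) = e_{n+1} e_{n+2} ...
      from A while v_{n+1} ∈ A, so the distance tends to 0 there; while v_{n+1} ∉ A the
      ultrapath A separates them, so the distance is bounded below.
   4. Choosing block boundaries b_m with b_{m+1} = (m+1)(b_m + 1), each A-block and each
      gap is much longer than everything before it, so the proportion of close times
      oscillates between nearly 1 and nearly 0: (e_1 e_2 ..., A) is a DC1 pair. *)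

Lemma least_witness (P : nat -> Prop) :
  (exists n, P n) -> exists n, P n /\ forall j, (j < n)%nat -> ~ P j.
Proof.
  intro Hex.
  destruct (dec_inh_nat_subset_has_unique_least_element P (fun n => classic (P n)) Hex)
    as [n [[Pn Hleast] _]].
  exists n. split; [exact Pn|]. intros j Hj Pj. specialize (Hleast j Pj). lia.
Qed.

Lemma unbounded_increasing_enum (P : nat -> Prop) :
  (forall N, exists m, (N <= m)%nat /\ P m) ->
  exists h : nat -> nat, (forall n, P (h n)) /\ (forall n, (h n < h (S n))%nat) /\
    (forall m, P m -> exists n, h n = m).
Proof.
  intro Hunb.
  assert (Hnext : forall a, exists b, P b /\ (a < b)%nat /\
            forall c, P c -> (a < c)%nat -> (b <= c)%nat).
  { intro a. destruct (least_witness (fun b => P b /\ (a < b)%nat)) as [b [[Pb ab] Hb]].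
    - destruct (Hunb (S a)) as [m [Hm Pm]]. exists m. split; [exact Pm | lia].
    - exists b. repeat split; auto. intros c Pc ac.
      destruct (le_lt_dec b c) as [|cb]; [assumption|]. exfalso. exact (Hb c cb (conj Pc ac)). }
  destruct (least_witness P) as [b0 [Pb0 Hb0]].
  { destruct (Hunb 0%nat) as [m [_ Pm]]. eauto. }
  destruct (choice _ Hnext) as [next Hnext_spec].
  set (h := fix h n := match n with O => b0 | S n' => next (h n') end).
  assert (Hstep : forall n, (h n < h (S n))%nat) by (intro n; apply Hnext_spec).
  exists h. split; [|split; [exact Hstep|]].
  - intros [|n]; [exact Pb0 | apply Hnext_spec].
  -
    assert (Hcover : forall n m, P m -> (m <= h n)%nat -> exists i, h i = m).
    { induction n as [|n IH]; intros m Pm Hm.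
      - exists 0%nat. destruct (le_lt_dec b0 m) as [|mb]; [simpl in *; lia|].
        exfalso. exact (Hb0 m mb Pm).
      - destruct (le_lt_dec m (h n)) as [|Hlt]; [exact (IH m Pm ltac:(assumption))|].
        exists (S n). destruct (Hnext_spec (h n)) as [_ [_ Hmin]].
        specialize (Hmin m Pm Hlt). simpl in *. lia. }
    assert (Hgrow : forall n, (n <= h n)%nat).
    { induction n as [|n IH]; [lia|]. specialize (Hstep n). lia. }
    intros m Pm. exact (Hcover m m Pm (Hgrow m)).
Qed.

Lemma bijective_enum_from_code {T : Type} (P : T -> Prop) (code : T -> nat) :
  (forall x y, P x -> P y -> code x = code y -> x = y) ->
  (forall N, exists x, P x /\ (N <= code x)%nat) ->
  exists p : nat -> T, (forall i, P (p i)) /\ (forall q, P q -> exists! i, p i = q).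
Proof.
  intros Hinj Hunb.
  destruct (unbounded_increasing_enum (fun m => exists x, P x /\ code x = m))
    as [h [Hh_codes [Hh_step Hh_onto]]].
  { intro N. destruct (Hunb N) as [x [Px Hx]]. eauto. }
  assert (Hh_inj : forall i j, h i = h j -> i = j).
  { assert (Hmono : forall i j, (i < j)%nat -> (h i < h j)%nat).
    { intros i j Hij. induction Hij; [apply Hh_step|]. specialize (Hh_step m). lia. }
    intros i j E. destruct (lt_eq_lt_dec i j) as [[H|H]|H]; auto; apply Hmono in H; lia. }
  destruct (choice (fun n x => P x /\ code x = h n) Hh_codes) as [p Hp].
  exists p. split; [intro i; apply Hp|].
  intros q Pq. destruct (Hh_onto (code q) (ex_intro _ q (conj Pq eq_refl))) as [n Hn].
  exists n. split.
  - destruct (Hp n) as [Pn Cn]. apply Hinj; auto. congruence.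
  - intros n' E. subst q. apply Hh_inj. destruct (Hp n') as [_ Cn']. congruence.
Qed.

(* Cantor's pairing stays folded under [simpl]; codes are compared through injectivity. *)
Arguments to_nat : simpl never.

Lemma to_nat_inj a b : to_nat a = to_nat b -> a = b.
Proof. intro E. rewrite <- (cancel_of_to a), <- (cancel_of_to b), E. reflexivity. Qed.

Fixpoint code_list (a : list nat) : nat :=
  match a with nil => O | x :: a' => S (to_nat (x, code_list a')) end.

Lemma code_list_inj a b : code_list a = code_list b -> a = b.
Proof.
  revert b. induction a as [|x a IH]; intros [|y b]; simpl; try discriminate; auto.
  intro E. injection E as E. apply to_nat_inj in E. injection E as -> E. f_equal. auto.
Qed.

Inductive G0term :=
  | tSing (n : nat) | tRange (n : nat) | tUnion (a b : G0term) | tInter (a b : G0term).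

Fixpoint interp (r : nat -> nat -> Prop) (t : G0term) : nat -> Prop :=
  match t with
  | tSing n => fun w => w = n
  | tRange n => r n
  | tUnion a b => fun x => interp r a x \/ interp r b x
  | tInter a b => fun x => interp r a x /\ interp r b x
  end.

Fixpoint code_term (t : G0term) : nat :=
  match t with
  | tSing n => to_nat (0%nat, n)
  | tRange n => to_nat (1%nat, n)
  | tUnion a b => to_nat (2%nat, to_nat (code_term a, code_term b))
  | tInter a b => to_nat (3%nat, to_nat (code_term a, code_term b))
  end.

Lemma code_term_inj t t' : code_term t = code_term t' -> t = t'.
Proof.
  revert t'. induction t; destruct t'; simpl; intro E; apply to_nat_inj in E;
    injection E; intros; try discriminate; subst; auto;
    match goal with H : to_nat _ = to_nat _ |- _ => apply to_nat_inj in H; injection H; intros end;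
    f_equal; auto.
Qed.

Lemma G0i_term (r : nat -> nat -> Prop) B : G0i r B -> exists t, forall x, B x <-> interp r t x.
Proof.
  induction 1 as [v|e|B C _ [a Ha] _ [b Hb]|B C _ [a Ha] _ [b Hb]].
  - exists (tSing v). simpl. tauto.
  - exists (tRange e). simpl. tauto.
  - exists (tUnion a b). simpl. intro x. rewrite Ha, Hb. tauto.
  - exists (tInter a b). simpl. intro x. rewrite Ha, Hb. tauto.
Qed.

Definition code_set (r : nat -> nat -> Prop) (B : nat -> Prop) : nat :=
  code_term (epsilon (inhabits (tSing 0)) (fun t => forall x, B x <-> interp r t x)).

(* The chosen term really denotes B (this is where B ∈ 𝒢^0 is used). *)
Lemma code_set_spec r B : inG0 r B -> forall x,
  B x <-> interp r (epsilon (inhabits (tSing 0)) (fun t => forall x, B x <-> interp r t x)) x.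
Proof.
  intros [C [HC HBC]]. apply epsilon_spec.
  destruct (G0i_term r C HC) as [t Ht]. exists t. intro x. rewrite HBC. apply Ht.
Qed.

Lemma code_set_inj r B B' : inG0 r B -> inG0 r B' -> code_set r B = code_set r B' -> B = B'.
Proof.
  intros HB HB' E. unfold code_set in E. apply code_term_inj in E.
  apply functional_extensionality. intro x. apply propositional_extensionality.
  rewrite (code_set_spec r B HB x), (code_set_spec r B' HB' x), E. reflexivity.
Qed.

Definition code_upath (r : nat -> nat -> Prop) (q : list nat * (nat -> Prop)) : nat :=
  to_nat (code_list (fst q), code_set r (snd q)).

Lemma code_upath_inj (s : nat -> nat) r q q' :
  is_upath s r q -> is_upath s r q' -> code_upath r q = code_upath r q' -> q = q'.
Proof.
  destruct q as [a B], q' as [a' B']. intros [HB _] [HB' _] E.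
  unfold code_upath in E. apply to_nat_inj in E. injection E as Ea EB.
  apply code_list_inj in Ea. apply code_set_inj in EB; auto. subst. reflexivity.
Qed.

Lemma half_pow_antitone a b : (a <= b)%nat -> (/2) ^ b <= (/2) ^ a.
Proof. induction 1 as [|m _ IH]; [lra|]. simpl. pose proof (pow_lt (/2) m). lra. Qed.

Lemma dist_least_separating {V E : Type} (s : E -> V) (p : nat -> list E * (V -> Prop)) x y :
  x <> y -> (exists i, separates s p x y i) ->
  exists i, Defs.dist s p x y = (/2) ^ (S i) /\ separates s p x y i /\
    forall j, (j < i)%nat -> ~ separates s p x y j.
Proof.
  intros Hxy Hsep. destruct (least_witness _ Hsep) as [i [Hi Hleast]].
  exists i. split; [|split; assumption]. unfold Defs.dist.
  match goal with |- epsilon ?I ?P = _ => pose proof (epsilon_spec I P) as Hspec end.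
  destruct Hspec as [[Heq _]|[_ [j [Hj [Hleast_j ->]]]]].
  - exists ((/2) ^ (S i)). right. eauto.
  - contradiction.
  - destruct (lt_eq_lt_dec i j) as [[H|H]|H].
    + exfalso. exact (Hleast_j i H Hi).
    + subst. reflexivity.
    + exfalso. exact (Hleast j H Hj).
Qed.

Lemma ind_true (P : Prop) : P -> Defs.ind P = 1.
Proof. intro H. unfold Defs.ind. destruct (excluded_middle_informative P); tauto. Qed.
Lemma ind_false (P : Prop) : ~ P -> Defs.ind P = 0.
Proof. intro H. unfold Defs.ind. destruct (excluded_middle_informative P); tauto. Qed.
Lemma ind_unit (P : Prop) : 0 <= Defs.ind P <= 1.
Proof. unfold Defs.ind. destruct (excluded_middle_informative P); lra. Qed.

Section CesaroAverages.
Variable f : nat -> R.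
Hypothesis f_unit : forall k, 0 <= f k <= 1.

Lemma partial_sum_nonneg m : 0 <= sum_f_R0 f m.
Proof.
  induction m as [|m IH]; simpl; [apply f_unit|]. specialize (f_unit (S m)). lra.
Qed.

Lemma partial_sum_le m : sum_f_R0 f m <= INR (S m).
Proof.
  induction m as [|m IH]; simpl sum_f_R0; [specialize (f_unit 0%nat); simpl; lra|].
  rewrite (S_INR (S m)). specialize (f_unit (S m)). lra.
Qed.

Lemma partial_sum_ones L m : (forall j, (L <= j <= m)%nat -> f j = 1) ->
  INR (S m) - INR L <= sum_f_R0 f m.
Proof.
  induction m as [|m IH]; intro Hone; simpl sum_f_R0.
  - destruct L as [|L]; [rewrite Hone by lia; simpl; lra|].
    assert (INR 1 <= INR (S L)) by (apply le_INR; lia). specialize (f_unit 0%nat). lra.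
  - destruct (le_lt_dec L (S m)) as [HL|HL].
    + rewrite (Hone (S m)) by lia. rewrite (S_INR (S m)).
      assert (INR (S m) - INR L <= sum_f_R0 f m) by (apply IH; intros; apply Hone; lia). lra.
    + assert (INR (S (S m)) <= INR L) by (apply le_INR; lia).
      pose proof (partial_sum_nonneg (S m)). simpl sum_f_R0 in *. lra.
Qed.

Lemma partial_sum_zeros U m : (forall j, (U <= j <= m)%nat -> f j = 0) ->
  sum_f_R0 f m <= INR U.
Proof.
  induction m as [|m IH]; intro Hzero; simpl sum_f_R0.
  - destruct U as [|U]; [rewrite Hzero by lia; simpl; lra|].
    assert (INR 1 <= INR (S U)) by (apply le_INR; lia). specialize (f_unit 0%nat). simpl in *. lra.
  - destruct (le_lt_dec U (S m)) as [HU|HU].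
    + rewrite (Hzero (S m)) by lia.
      assert (sum_f_R0 f m <= INR U) by (apply IH; intros; apply Hzero; lia). lra.
    + assert (INR (S (S m)) <= INR U) by (apply le_INR; lia).
      pose proof (partial_sum_le (S m)). simpl sum_f_R0 in *. lra.
Qed.

Lemma average_nonneg m : (0 < m)%nat -> 0 <= sum_f_R0 f m / INR m.
Proof.
  intro Hm. unfold Rdiv. apply Rmult_le_pos; [apply partial_sum_nonneg|].
  left. apply Rinv_0_lt_compat, lt_0_INR, Hm.
Qed.

Lemma average_upper m eps : 0 < eps -> / eps < INR m -> sum_f_R0 f m / INR m < 1 + eps.
Proof.
  intros He Hm. assert (Hpos : 0 < INR m) by (pose proof (Rinv_0_lt_compat eps He); lra).
  pose proof (partial_sum_le m) as Hsum. rewrite S_INR in Hsum.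
  assert (1 < eps * INR m).
  { apply (Rmult_lt_compat_l eps) in Hm; [|exact He]. rewrite Rinv_r in Hm; lra. }
  apply Rmult_lt_reg_r with (INR m); [exact Hpos|].
  unfold Rdiv. rewrite Rmult_assoc, Rinv_l, Rmult_1_r by lra. lra.
Qed.

Lemma average_near_one L m eps : (forall j, (L <= j <= m)%nat -> f j = 1) ->
  INR L < eps * INR m -> 1 - eps < sum_f_R0 f m / INR m.
Proof.
  intros Hone HL. pose proof (partial_sum_ones L m Hone) as Hsum. rewrite S_INR in Hsum.
  pose proof (pos_INR L). assert (Hpos : 0 < INR m) by (destruct (pos_INR m) as [|E]; [|rewrite <- E in HL]; lra).
  apply Rmult_lt_reg_r with (INR m); [exact Hpos|].
  unfold Rdiv. rewrite Rmult_assoc, Rinv_l, Rmult_1_r by lra. lra.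
Qed.

Lemma average_near_zero U m eps : (forall j, (U <= j <= m)%nat -> f j = 0) ->
  INR U < eps * INR m -> sum_f_R0 f m / INR m < eps.
Proof.
  intros Hzero HU. pose proof (partial_sum_zeros U m Hzero) as Hsum.
  pose proof (pos_INR U). assert (Hpos : 0 < INR m) by (destruct (pos_INR m) as [|E]; [|rewrite <- E in HU]; lra).
  apply Rmult_lt_reg_r with (INR m); [exact Hpos|].
  unfold Rdiv. rewrite Rmult_assoc, Rinv_l, Rmult_1_r by lra. lra.
Qed.

End CesaroAverages.

Lemma countable_subset {T : Type} (X Y : T -> Prop) :
  subset Y X -> countable_set X -> countable_set Y.
Proof. intros HYX [f Hf]. exists f. intros x Hx. exact (Hf x (HYX x Hx)). Qed.

Section UltragraphG.
Variables k l : nat -> nat.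
Hypothesis k_pos : forall n, (1 <= n)%nat -> (0 < k n)%nat.

Local Notation A := (Aset k l).
Local Notation r := (rngG k l).

(* Each block contributes at least one vertex, so t_{n+1} >= n. *)
Lemma tsum_ge n : (n <= tsum k l n)%nat.
Proof. induction n as [|n IH]; simpl; [lia|]. specialize (k_pos (S n)). lia. Qed.

Lemma A_not_v0 : ~ A 0.
Proof. intros [n [_ H]]. lia. Qed.

(* A contains vertices of arbitrarily large index (the first vertex of each block). *)
Lemma A_unbounded N : exists v, (N <= v)%nat /\ A v.
Proof.
  exists (S (tsum k l N)). split; [pose proof (tsum_ge N); lia|].
  exists (S N). unfold t_. simpl pred. specialize (k_pos (S N)). split; lia.
Qed.

(* No edge enters v_0; hence e_0 can only occur at the start of a path. *)
Lemma range_not_v0 e : ~ r e 0.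
Proof. destruct e; simpl; [exact A_not_v0 | lia]. Qed.

Lemma G0i_bounded_or_contains_A B : G0i r B ->
  (exists M, forall x, B x -> (x < M)%nat) \/ subset A B.
Proof.
  induction 1 as [v|[|m]|B C _ IHB _ IHC|B C _ IHB _ IHC].
  - left. exists (S v). intros x ->. lia.
  - right. intros x Hx. exact Hx.
  - left. exists (S (S (S m))). simpl. intros x ->. lia.
  - destruct IHB as [[M1 H1]|H1]; [destruct IHC as [[M2 H2]|H2]|].
    + left. exists (M1 + M2)%nat. intros x [h|h]; [apply H1 in h|apply H2 in h]; lia.
    + right. intros x Hx. right. auto.
    + right. intros x Hx. left. auto.
  - destruct IHB as [[M1 H1]|H1]; [left; exists M1; intros x [h _]; auto|].
    destruct IHC as [[M2 H2]|H2]; [left; exists M2; intros x [_ h]; auto|].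
    right. intros x Hx. split; auto.
Qed.

Lemma inG0_bounded_or_contains_A B : inG0 r B ->
  (exists M, forall x, B x -> (x < M)%nat) \/ subset A B.
Proof.
  intros [C [HC HBC]]. destruct (G0i_bounded_or_contains_A C HC) as [[M H]|H].
  - left. exists M. intros x Hx. apply H, HBC, Hx.
  - right. intros x Hx. apply HBC, H, Hx.
Qed.

(* A bounded set of vertices emits finitely many edges, since s(e_n) = v_n. *)
Lemma infinite_emitter_contains_A B : infinite_emitter srcG r B -> subset A B.
Proof.
  intros [HG Hinf]. destruct (inG0_bounded_or_contains_A B HG) as [[M HM]|H]; [|exact H].
  exfalso. destruct (Hinf (seq 0 M)) as [e [He Hnot]].
  apply Hnot, in_seq. apply HM in He. unfold srcG in He. lia.
Qed.

Lemma A_inG0 : inG0 r A.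
Proof. exists (r 0%nat). split; [constructor | simpl; tauto]. Qed.

Lemma A_infinite_emitter : infinite_emitter srcG r A.
Proof.
  split; [exact A_inG0|]. intro a. destruct (A_unbounded (S (list_max a))) as [v [Hv HA]].
  exists v. split; [exact HA|]. intro Hin.
  pose proof (proj1 (list_max_le a (list_max a)) (le_n _)) as Hall.
  rewrite Forall_forall in Hall. specialize (Hall v Hin). lia.
Qed.

Lemma A_minimal : minimal_infinite_emitter srcG r A.
Proof.
  split; [exact A_infinite_emitter|]. intros B _ _ [v [Hv Hnv]] HB.
  exact (Hnv (infinite_emitter_contains_A B HB v Hv)).
Qed.

Lemma minimal_emitter_is_A B : minimal_infinite_emitter srcG r B -> B = A.
Proof.
  intros [HB Hmin]. pose proof (infinite_emitter_contains_A B HB) as HAB.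
  apply functional_extensionality. intro x. apply propositional_extensionality.
  split; [|apply HAB]. intro Hx. apply NNPP. intro Hnx.
  exact (Hmin A A_inG0 HAB (ex_intro _ x (conj Hx Hnx)) A_infinite_emitter).
Qed.

(* The finite points of X are A and (e_0, A): no edge has v_0 in its range,
   and only e_0 has range containing A. *)
Lemma finite_points a B : in_X srcG r (Fin a B) -> B = A /\ (a = nil \/ a = 0%nat :: nil).
Proof.
  intros [Hpath [Hmin Hend]]. apply minimal_emitter_is_A in Hmin. subst B. split; [reflexivity|].
  destruct a as [|e a']; [left; reflexivity|]. right.
  destruct (exists_last (l := e :: a') ltac:(discriminate)) as [b [z Hz]]. rewrite Hz in *.
  assert (Hz0 : z = 0%nat).
  { specialize (Hend z). rewrite length_app in Hend. simpl in Hend.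
    replace (pred (length b + 1)) with (length b) in Hend by lia.
    rewrite nth_error_app2, Nat.sub_diag in Hend by lia. specialize (Hend eq_refl).
    destruct z as [|m]; [reflexivity|]. exfalso.
    destruct (A_unbounded (S (S (S m)))) as [v [Hv HAv]]. apply Hend in HAv. simpl in HAv. lia. }
  subst z. destruct b as [|b0 b']; [reflexivity|]. exfalso.
  destruct (exists_last (l := b0 :: b') ltac:(discriminate)) as [c [y Hy]]. rewrite Hy in *.
  rewrite <- app_assoc in Hpath. simpl in Hpath.
  specialize (Hpath (length c) y 0%nat).
  rewrite !nth_error_app2, Nat.sub_diag in Hpath by lia.
  replace (S (length c) - length c)%nat with 1%nat in Hpath by lia.
  exact (range_not_v0 y (Hpath eq_refl eq_refl)).
Qed.

(* An infinite path e_a e_b ... never returns to e_0, so it is e_a e_b e_{b+1} ... *)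
Lemma infinite_points g : in_X srcG r (Inf g) -> forall i, g (S i) = (g 1%nat + i)%nat.
Proof.
  intros Hg i. induction i as [|i IH]; [lia|].
  pose proof (Hg i) as Hprev. pose proof (Hg (S i)) as Hnext.
  destruct (g (S i)) as [|m] eqn:E.
  - exfalso. exact (range_not_v0 _ Hprev).
  - simpl in Hnext. unfold srcG in Hnext. lia.
Qed.

(* X is countable: its points are A, (e_0, A) and the paths e_a e_b e_{b+1} ... *)
Lemma X_countable : countable_set (in_X srcG r).
Proof.
  exists (fun n => match n with
    | O => Fin nil A
    | S O => Fin (0%nat :: nil) A
    | S (S m) => let (a, b) := of_nat m in
                 Inf (fun i => match i with O => a | S j => (b + j)%nat end)
    end).
  intros [g|a B] Hx.
  - exists (S (S (to_nat (g 0%nat, g 1%nat)))). rewrite cancel_of_to. f_equal.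
    apply functional_extensionality. intros [|i]; [reflexivity|].
    rewrite (infinite_points g Hx i). reflexivity.
  - destruct (finite_points a B Hx) as [-> [-> | ->]]; [exists 0%nat | exists 1%nat]; reflexivity.
Qed.

Lemma ranges_nonempty_G : ranges_nonempty r.
Proof.
  intros [|m]; [|exists (S (S m)); reflexivity].
  destruct (A_unbounded 0) as [v [_ Hv]]. exists v. exact Hv.
Qed.

Lemma orbit_in_X : in_X srcG r (Inf (fun i => S i)).
Proof. intro n. reflexivity. Qed.

Lemma A_in_X : in_X srcG r (Fin nil A).
Proof.
  split; [intros [|i] e f H; discriminate|].
  split; [exact A_minimal | intros e H; discriminate].
Qed.

Lemma A_upath : is_upath srcG r (nil, A).
Proof.
  split; [exact A_inG0|]. split.
  - intros [|i] e f H; discriminate.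
  - intros e H. discriminate.
Qed.

Lemma single_edge_upath n : is_upath srcG r (S n :: nil, fun w => w = S (S n)).
Proof.
  split; [|split].
  - exists (fun w => w = S (S n)). split; [constructor | tauto].
  - intros [|i] e f H1 H2; discriminate.
  - intros e H. simpl in H. injection H as <-. intros v Hv. exact Hv.
Qed.

(* The ultrapaths of 𝒢' are countably infinite, hence admit an enumeration. *)
Lemma enumeration_exists : exists p, enumeration srcG r p.
Proof.
  destruct (bijective_enum_from_code (is_upath srcG r) (code_upath r)) as [p Hp].
  - intros q q' Hq Hq'. exact (code_upath_inj srcG r q q' Hq Hq').
  - intro N. exists (S N :: nil, fun w => w = S (S N)). split; [apply single_edge_upath|].
    unfold code_upath. simpl fst.
    pose proof (to_nat_non_decreasing (code_list (S N :: nil)) (code_set r (fun w => w = S (S N)))).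
    assert (code_list (S N :: nil) = S (to_nat (S N, 0%nat))) by reflexivity.
    pose proof (to_nat_non_decreasing (S N) 0). cbn [snd]. lia.
  - exists p. exact Hp.
Qed.

Definition orbit_pt (n : nat) : pt nat nat := Inf (fun i => S (i + n)).
Definition A_pt : pt nat nat := Fin nil A.

Lemma shiftn_orbit n : shiftn n (Inf (fun i => S i)) = orbit_pt n.
Proof.
  unfold orbit_pt. induction n as [|n IH].
  - simpl. f_equal. apply functional_extensionality. intro i. f_equal. lia.
  - unfold shiftn in *. simpl. rewrite IH. simpl. f_equal.
    apply functional_extensionality. intro i. f_equal. lia.
Qed.

Lemma shiftn_A n : shiftn n A_pt = A_pt.
Proof. induction n as [|n IH]; [reflexivity|]. unfold shiftn in *. simpl. rewrite IH. reflexivity. Qed.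

Lemma init_eventually_agree q : is_upath srcG r q -> exists c, forall n, (c <= n)%nat ->
  A (S n) -> (is_init srcG q (orbit_pt n) <-> is_init srcG q A_pt).
Proof.
  destruct q as [[|e a] B]; intros [HG _]; simpl in HG.
  - destruct (inG0_bounded_or_contains_A B HG) as [[M HM]|HAB].
    + (* B bounded: q is an initial segment of neither point, for large n *)
      exists M. intros n Hn _. split; intros [_ [[e [He HBe]]|[B0 [E HB0]]]]; try discriminate.
      * simpl in He. injection He as <-. apply HM in HBe. unfold srcG in HBe. lia.
      * injection E as <-. destruct (A_unbounded M) as [v [Hv HAv]].
        apply HB0, HM in HAv. lia.
    + (* A ⊆ B: q is an initial segment of both points *)
      exists 0%nat. intros n _ HA. split; intros _; split; try (intros [|j] e0 H; discriminate).
      * right. exists A. split; [reflexivity | exact HAB].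
      * left. exists (S n). split; [reflexivity | exact (HAB _ HA)].
  - (* q starts with an edge: it is an initial segment of neither point for large n *)
    exists (S e). intros n Hn _. split; intros [H _]; exfalso;
      specialize (H 0%nat e eq_refl); simpl in H; [injection H; lia | discriminate].
Qed.

Section Distances.
Variable p : nat -> list nat * (nat -> Prop).
Hypothesis p_enum : enumeration srcG r p.

Lemma separation_threshold N : exists K, forall i n, (i <= N)%nat -> (K <= n)%nat ->
  A (S n) -> ~ separates srcG p (orbit_pt n) A_pt i.
Proof.
  destruct p_enum as [Hup _]. induction N as [|N [K HK]].
  - destruct (init_eventually_agree (p 0%nat) (Hup 0%nat)) as [c Hc].
    exists c. intros i n Hi Hn HA. replace i with 0%nat by lia.
    specialize (Hc n Hn HA). unfold separates. tauto.
  - destruct (init_eventually_agree (p (S N)) (Hup (S N))) as [c Hc].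
    exists (K + c)%nat. intros i n Hi Hn HA. destruct (le_lt_dec i N).
    + apply HK; auto; lia.
    + replace i with (S N) by lia. specialize (Hc n ltac:(lia) HA). unfold separates. tauto.
Qed.

Lemma orbit_dist_least n : exists i, Defs.dist srcG p (orbit_pt n) A_pt = (/2) ^ (S i) /\
  separates srcG p (orbit_pt n) A_pt i /\
  forall j, (j < i)%nat -> ~ separates srcG p (orbit_pt n) A_pt j.
Proof.
  apply dist_least_separating; [discriminate|].
  destruct (proj2 p_enum _ (single_edge_upath n)) as [i [Hi _]].
  exists i. left. rewrite Hi. split.
  - split.
    + intros [|[|j]] e H; try discriminate. simpl in H. injection H as <-. reflexivity.
    + left. exists (S (S n)). split; reflexivity.
  - intros [H _]. specialize (H 0%nat (S n) eq_refl). discriminate.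
Qed.

Lemma dist_small_on_A delta : 0 < delta -> exists K, forall n, (K <= n)%nat ->
  A (S n) -> Defs.dist srcG p (orbit_pt n) A_pt < delta.
Proof.
  intro Hd. destruct (pow_lt_1_zero (/2) ltac:(rewrite Rabs_pos_eq; lra) delta Hd) as [N HN].
  destruct (separation_threshold N) as [K HK]. exists K. intros n Hn HA.
  destruct (orbit_dist_least n) as [i [-> [Hi _]]].
  destruct (le_lt_dec i N) as [HiN|HiN]; [exfalso; exact (HK i n HiN Hn HA Hi)|].
  specialize (HN N (le_n N)). rewrite Rabs_pos_eq in HN by (apply pow_le; lra).
  pose proof (half_pow_antitone N (S i) ltac:(lia)). lra.
Qed.

(* While v_{n+1} ∉ A, the ultrapath A itself separates the two points. *)
Lemma dist_large_off_A i0 : p i0 = (nil, A) -> forall n,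
  ~ A (S n) -> (/2) ^ (S i0) <= Defs.dist srcG p (orbit_pt n) A_pt.
Proof.
  intros Hi0 n HA. destruct (orbit_dist_least n) as [i [-> [_ Hleast]]].
  assert (Hsep : separates srcG p (orbit_pt n) A_pt i0).
  { right. rewrite Hi0. split.
    - intros [_ [[e [He HAe]]|[B0 [E _]]]]; [|discriminate].
      simpl in He. injection He as <-. exact (HA HAe).
    - split; [intros [|j] e H; discriminate|].
      right. exists A. split; [reflexivity | intros v Hv; exact Hv]. }
  destruct (le_lt_dec i i0); [apply half_pow_antitone; lia|].
  exfalso. exact (Hleast i0 ltac:(assumption) Hsep).
Qed.
End Distances.
End UltragraphG.

(* Block boundaries b_0 = 0, b_{m+1} = (m+1)(b_m + 1): each stretch (b_m, b_{m+1}] is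
   longer than m times everything before it. *)
Fixpoint boundary (m : nat) : nat :=
  match m with O => O | S m' => (S m' * (boundary m' + 1))%nat end.

Lemma boundary_lt_succ m : (boundary m < boundary (S m))%nat.
Proof. simpl. nia. Qed.

Lemma boundary_mono i j : (i <= j)%nat -> (boundary i <= boundary j)%nat.
Proof. induction 1 as [|m _ IH]; [lia|]. pose proof (boundary_lt_succ m). lia. Qed.

Lemma boundary_ge m : (m <= boundary m)%nat.
Proof. induction m as [|m IH]; [simpl; lia|]. pose proof (boundary_lt_succ m). lia. Qed.

(* The stretches alternate: A-blocks V_{j+1} = (b_{2j}, b_{2j+1}], then gaps (b_{2j+1}, b_{2j+2}]. *)
Definition block_len (n : nat) : nat :=
  match n with O => 1%nat | S j => (boundary (S (2*j)) - boundary (2*j))%nat end.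
Definition gap_len (n : nat) : nat :=
  match n with O => 1%nat | S j => (boundary (S (S (2*j))) - boundary (S (2*j)))%nat end.

Local Notation A := (Aset block_len gap_len).

Lemma block_gap_pos n : (1 <= n)%nat -> (0 < block_len n)%nat /\ (0 < gap_len n)%nat.
Proof.
  intro Hn. destruct n as [|j]; [lia|]. unfold block_len, gap_len.
  pose proof (boundary_lt_succ (2*j)). pose proof (boundary_lt_succ (S (2*j))). lia.
Qed.

Lemma block_len_pos n : (1 <= n)%nat -> (0 < block_len n)%nat.
Proof. intro Hn. exact (proj1 (block_gap_pos n Hn)). Qed.

Lemma tsum_boundary m : tsum block_len gap_len m = boundary (2*m).
Proof.
  induction m as [|m IH]; [reflexivity|]. cbn [tsum]. rewrite IH. unfold block_len, gap_len.
  replace (2 * S m)%nat with (S (S (2*m))) by lia.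
  pose proof (boundary_lt_succ (2*m)). pose proof (boundary_lt_succ (S (2*m))). lia.
Qed.

Lemma A_blocks v : A v <-> exists j, (boundary (2*j) < v <= boundary (S (2*j)))%nat.
Proof.
  unfold Aset, t_. split.
  - intros [[|j] [Hn Hv]]; [lia|]. exists j. simpl pred in Hv.
    rewrite tsum_boundary in Hv. unfold block_len in Hv.
    pose proof (boundary_lt_succ (2*j)). lia.
  - intros [j Hj]. exists (S j). split; [lia|]. simpl pred. rewrite tsum_boundary. unfold block_len.
    pose proof (boundary_lt_succ (2*j)). lia.
Qed.

Lemma A_gap j v : (boundary (S (2*j)) < v <= boundary (S (S (2*j))))%nat -> ~ A v.
Proof.
  intros Hv HA. apply A_blocks in HA. destruct HA as [i Hi]. destruct (le_lt_dec i j).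
  - pose proof (boundary_mono (S (2*i)) (S (2*j))). lia.
  - pose proof (boundary_mono (S (S (2*j))) (2*i)). lia.
Qed.

Lemma boundary_dominates eps C : 0 < eps -> exists J, forall j, (J <= j)%nat ->
  INR C + INR (boundary j) < eps * INR (boundary (S j) - 1).
Proof.
  intro He. destruct (INR_archimed eps (INR C + 1) He) as [J HJ]. exists J. intros j Hj.
  set (b := boundary j).
  assert (Hlen : (j * (b + 1) <= boundary (S j) - 1)%nat).
  { change (boundary (S j)) with (S j * (b + 1))%nat. rewrite Nat.mul_succ_l. lia. }
  apply le_INR in Hlen. rewrite mult_INR, plus_INR in Hlen. change (INR 1) with 1 in Hlen.
  assert (HjJ : INR J <= INR j) by (apply le_INR; exact Hj).
  pose proof (pos_INR b). pose proof (pos_INR C).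
  assert (Hfac : INR C + 1 < eps * INR j) by nra.
  assert ((INR C + 1) * (INR b + 1) < eps * INR j * (INR b + 1))
    by (apply Rmult_lt_compat_r; lra).
  assert (eps * (INR j * (INR b + 1)) <= eps * INR (boundary (S j) - 1))
    by (apply Rmult_le_compat_l; lra).
  nra.
Qed.

Section DC1Pair.
Variable p : nat -> list nat * (nat -> Prop).
Hypothesis p_enum : enumeration srcG (rngG block_len gap_len) p.

Definition closeness (delta : R) (n : nat) : R :=
  Defs.ind (Defs.dist srcG p (orbit_pt n) (A_pt block_len gap_len) < delta).

Lemma Phi_closeness m delta :
  Phi srcG p m delta (Inf (fun i => S i)) (Fin nil A) = sum_f_R0 (closeness delta) m / INR m.
Proof.
  unfold Phi. f_equal. apply sum_eq. intros n _. unfold closeness.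
  rewrite shiftn_orbit. change (Fin nil A) with (A_pt block_len gap_len).
  rewrite shiftn_A. reflexivity.
Qed.

Lemma closeness_unit delta n : 0 <= closeness delta n <= 1.
Proof. apply ind_unit. Qed.

(* Along the A-blocks the orbit is δ-close to A for the overwhelming majority of times. *)
Lemma DC1_limsup delta : 0 < delta ->
  limsup_eq (fun n => Phi srcG p (S n) delta (Inf (fun i => S i)) (Fin nil A)) 1.
Proof.
  intros Hd eps He. split.
  - destruct (INR_archimed 1 (/ eps) ltac:(lra)) as [N HN]. exists N. intros n Hn.
    rewrite Phi_closeness. apply average_upper; [apply closeness_unit | exact He |].
    assert (INR N <= INR (S n)) by (apply le_INR; lia). lra.
  - intro N. destruct (dist_small_on_A _ _ block_len_pos p p_enum delta Hd) as [K HK].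
    destruct (boundary_dominates eps K He) as [J HJ].
    set (j := (2 * S (N + J))%nat). set (m := (boundary (S j) - 1)%nat).
    assert (Hm : (S N <= m)%nat) by (pose proof (boundary_ge (S j)); unfold m, j in *; lia).
    exists (m - 1)%nat. split; [lia|]. replace (S (m - 1)) with m by lia.
    rewrite Phi_closeness.
    apply (average_near_one _ (closeness_unit delta) (Nat.max K (boundary j))).
    + intros n Hn. apply ind_true. apply HK; [lia|].
      apply A_blocks. exists (S (N + J)). fold j. unfold m in Hn. lia.
    + assert (INR (Nat.max K (boundary j)) <= INR K + INR (boundary j))
        by (rewrite <- plus_INR; apply le_INR; lia).
      specialize (HJ j ltac:(unfold j; lia)). fold m in HJ. lra.
Qed.

(* Along the gaps the orbit stays far from A for the overwhelming majority of times. *)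
Lemma DC1_liminf i0 : p i0 = (nil, A) ->
  liminf_eq (fun n => Phi srcG p (S n) ((/2) ^ (S i0)) (Inf (fun i => S i)) (Fin nil A)) 0.
Proof.
  intros Hi0 eps He. set (delta0 := (/2) ^ (S i0)). split.
  - exists 0%nat. intros n _. rewrite Phi_closeness.
    pose proof (average_nonneg _ (closeness_unit delta0) (S n) ltac:(lia)). lra.
  - intro N. destruct (boundary_dominates eps 0 He) as [J HJ].
    set (j := S (2 * S (N + J))). set (m := (boundary (S j) - 1)%nat).
    assert (Hm : (S N <= m)%nat) by (pose proof (boundary_ge (S j)); unfold m, j in *; lia).
    exists (m - 1)%nat. split; [lia|]. replace (S (m - 1)) with m by lia.
    rewrite Phi_closeness.
    apply (average_near_zero _ (closeness_unit delta0) (boundary j)).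
    + intros n Hn. apply ind_false.
      assert (HnA : ~ A (S n)).
      { apply (A_gap (S (N + J))). fold j. pose proof (boundary_lt_succ j). unfold m in Hn. lia. }
      pose proof (dist_large_off_A _ _ p p_enum i0 Hi0 n HnA) as Hfar. fold delta0 in Hfar. lra.
    + specialize (HJ j ltac:(unfold j; lia)). fold m in HJ. change (INR 0) with 0 in HJ. lra.
Qed.

(* δ0 = 2^{-(i0+1)}, where A itself is the ultrapath p_{i0}. *)
Lemma DC1_orbit_A : DC1_pair srcG p (Inf (fun i => S i)) (Fin nil A).
Proof.
  split; [exact DC1_limsup|].
  destruct (proj2 p_enum _ (A_upath block_len gap_len)) as [i0 [Hi0 _]].
  exists ((/2) ^ (S i0)). split; [apply pow_lt; lra | exact (DC1_liminf i0 Hi0)].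
Qed.
End DC1Pair.

Theorem mainTheorem10 :
  exists k l : nat -> nat,
    (forall n, (1 <= n)%nat -> (0 < k n)%nat /\ (0 < l n)%nat) /\
    no_sinks srcG /\ ranges_nonempty (rngG k l) /\
    exists p : nat -> list nat * (nat -> Prop),
      enumeration srcG (rngG k l) p /\
      countable_set (in_X srcG (rngG k l)) /\
      in_X srcG (rngG k l) (Inf (fun i => S i)) /\
      in_X srcG (rngG k l) (Fin nil (Aset k l)) /\
      DC1_pair srcG p (Inf (fun i => S i)) (Fin nil (Aset k l)) /\
      ~ (exists S : pt nat nat -> Prop,
           subset S (in_X srcG (rngG k l)) /\ ~ countable_set S /\ DC1_set srcG p S) /\
      ~ Li_Yorke_chaotic srcG (rngG k l) p.
Proof.
  exists block_len, gap_len.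
  split; [exact block_gap_pos|].
  split; [intro v; exists v; reflexivity|].
  split; [exact (ranges_nonempty_G _ _ block_len_pos)|].
  destruct (enumeration_exists block_len gap_len) as [p Hp]. exists p.
  pose proof (X_countable block_len gap_len block_len_pos) as HX.
  assert (Hsubsets : forall S, subset S (in_X srcG (rngG block_len gap_len)) -> countable_set S)
    by (intros S HS; exact (countable_subset _ _ HS HX)).
  split; [exact Hp|]. split; [exact HX|].
  split; [apply orbit_in_X|]. split; [exact (A_in_X _ _ block_len_pos)|].
  split; [exact (DC1_orbit_A p Hp)|].
  split; intros [S [HS [Hnc _]]]; exact (Hnc (Hsubsets S HS)).
Qed.
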